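(* Let $A$ be a finite alphabet with at least two letters. No cellular automaton $F$ on $A^{\mathbb N}$ is expansive with respect to the Feldman pseudo-metric; that is, for every $\varepsilon>0$ there exist $x,y\in A^{\mathbb N}$ with $\mathfrak d_L(x,y)>0$ such that $\mathfrak d_L(F^t(x),F^t(y))\le\varepsilon$ for all $t\in\mathbb N$.
   Context: A cellular automaton with diameter $\delta\ge1$ is $F:A^{\mathbb N}\to A^{\mathbb N}$ with $F(x)_i=f(x_{[i,i+\delta)})$ for a local rule $f:A^\delta\to A$, where $x_{[i,j)}=x_i\cdots x_{j-1}$. The Levenshtein distance is $d_L(u,v)=\frac{|u|+|v|}{2}-\ell$, $\ell$ the length of a longest common subsequence of $u,v$; the Feldman pseudo-metric is $\mathfrak d_L(x,y)=\limsup_{l\to\infty}d_L(x_{[0,l)},y_{[0,l)})/l$. $F$ is expansive if $\exists\varepsilon>0$ such that for all $x,y$ with $\mathfrak d_L(x,y)>0$ there is $t\in\mathbb N$ with $\mathfrak d_L(F^t(x),F^t(y))>\varepsilon$. *)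

From Stdlib Require Import Reals.
From Coquelicot Require Import Coquelicot.
From mathcomp Require Import all_boot.

Set Implicit Arguments.
Unset Strict Implicit.
Unset Printing Implicit Defensive.
Local Open Scope nat_scope.

Definition factor (A : Type) (x : nat -> A) (i j : nat) : seq A :=
  map x (iota i (j - i)).

Fixpoint lcs (A : eqType) (u v : seq A) : nat :=
  match u with
  | [::] => 0
  | a :: u' =>
    (fix lcs_aux (v : seq A) : nat :=
       match v with
       | [::] => 0
       | b :: v' =>
         if a == b then (lcs u' v').+1
         else maxn (lcs u' (b :: v')) (lcs_aux v')
       end) v
  end.

(* Levenshtein distance d_L(u,v) = (|u|+|v|)/2 - lcs(u,v), as a real *)
Definition dL (A : eqType) (u v : seq A) : R :=
  Rminus (Rdiv (INR (size u + size v)) 2) (INR (lcs u v)).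

Definition feldman (A : eqType) (x y : nat -> A) : Rbar :=
  LimSup_seq (fun l => Rdiv (dL (factor x 0 l) (factor y 0 l)) (INR l)).

(* Cellular automaton with diameter delta and local rule f
   (f is applied to words of length delta only). *)
Definition CA (A : Type) (delta : nat) (f : seq A -> A) (x : nat -> A) : nat -> A :=
  fun i => f (factor x i (i + delta)).

Definition feldman_expansive (A : eqType) (F : (nat -> A) -> (nat -> A)) : Prop :=
  exists eps : R, Rlt R0 eps /\
    forall x y : nat -> A, Rbar_lt (Rbar.Finite R0) (feldman x y) ->
      exists t : nat, Rbar_lt (Rbar.Finite eps) (feldman (iter t F x) (iter t F y)).

From Stdlib Require Import Reals Lra FunctionalExtensionality.
From Coquelicot Require Import Coquelicot.
From mathcomp Require Import all_boot zify.

(* Let x be constantly a and let y be b exactly on the blocks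
   [N 2^k, (N+1) 2^k) and a elsewhere.  The Feldman distance from a constant
   sequence is the upper density of the set where the other sequence differs
   from that constant, so d(x, y) >= 1/(N+1) > 0.  Now F^t x is constant, and
   F^t y differs from it at i only if y meets a block in the window
   [i, i + t(delta-1)].  As the blocks grow geometrically, beyond
   (N+1) 2^(t(delta-1)) such i lie in the enlarged blocks [(N-1) 2^k, (N+1) 2^k),
   whose upper density is at most 4/(N-1).  Hence N >= 1 + 8/eps gives
   d(F^t x, F^t y) <= eps for every t. *)

Set Implicit Arguments.
Unset Strict Implicit.
Unset Printing Implicit Defensive.
Local Open Scope nat_scope.

Lemma lcs_nseq (A : eqType) (c : A) n w :
  lcs (nseq n c) w = minn n (count_mem c w).
Proof.
elim: n w => [|n IHn] w; first by rewrite min0n.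
elim: w => [|b w IHw]; first by rewrite minn0.
have -> : lcs (nseq n.+1 c) (b :: w) =
    if c == b then (lcs (nseq n c) w).+1
    else maxn (lcs (nseq n c) (b :: w)) (lcs (nseq n.+1 c) w) by [].
rewrite IHw !IHn /= (eq_sym b c).
case: (c =P b) => [->|_] /=; lia.
Qed.

Lemma dL_nseq (A : eqType) (c : A) w :
  dL (nseq (size w) c) w = INR (count (predC1 c) w).
Proof.
rewrite /dL lcs_nseq size_nseq (minn_idPr (count_size _ _)).
rewrite -(count_predC (pred1 c) w) -plusE !plus_INR.
rewrite (eq_count (a1 := predC1 c) (a2 := predC (pred1 c))) //.
lra.
Qed.

Local Open Scope R_scope.

Definition upper_density (P : pred nat) : Rbar :=
  LimSup_seq (fun l => INR (count P (iota 0 l)) / INR l).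

Lemma feldman_constl (A : eqType) (c : A) (z : nat -> A) :
  feldman (fun=> c) z = upper_density (fun i => z i != c).
Proof.
rewrite /feldman /upper_density; congr LimSup_seq.
apply: functional_extensionality => l; rewrite /factor subn0.
have -> : map (fun=> c) (iota 0 l) = nseq (size (map z (iota 0 l))) c.
  by rewrite size_map; elim: (iota 0 l) => //= i s ->.
by rewrite dL_nseq count_map.
Qed.

Lemma LimSup_seq_ge (u : nat -> R) (k : R) :
  (forall m, exists n, (m <= n)%N /\ k <= u n) -> Rbar_le k (LimSup_seq u).
Proof.
move=> freq; rewrite LimSup_InfSup_seq.
set v := fun m => Sup_seq (fun n => u (n + m)%nat).
have [_ glb] := is_inf_seq_glb _ _ (Inf_seq_correct v).
apply: glb => _ [m ->].
have [n [le_mn le_k]] := freq m.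
by apply: (Sup_seq_minor_le _ _ (n - m)); rewrite /= subnK.
Qed.

Lemma upper_density_gt0 (P : pred nat) (m : nat) : (0 < m)%N ->
  (forall k, exists l, [/\ (k <= l)%N, (0 < l)%N & (l <= m * count P (iota 0 l))%N]) ->
  Rbar_lt 0 (upper_density P).
Proof.
move=> /ltP m_gt0 freq.
have m_pos : 0 < INR m by apply: lt_0_INR.
apply: (Rbar_lt_le_trans _ (1 / INR m)); first by apply: Rdiv_lt_0_compat; lra.
apply: LimSup_seq_ge => k; have [l [le_kl /ltP l_gt0 /leP le_l]] := freq k.
exists l; split => //.
apply/(Rle_div_r (1 / INR m)); first exact: lt_0_INR.
have -> : 1 / INR m * INR l = INR l / INR m by field; lra.
apply/Rle_div_l => //.
by rewrite -mult_INR Nat.mul_comm; apply: le_INR.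
Qed.

Lemma upper_density_le (P : pred nat) (eps : R) (n0 : nat) :
  (forall l, (n0 < l)%N -> INR (count P (iota 0 l)) <= eps * INR l) ->
  Rbar_le (upper_density P) eps.
Proof.
move=> le_eps; rewrite -(LimSup_seq_const eps); apply: LimSup_le.
exists n0.+1 => l /leP lt_n0l.
apply/Rle_div_l; first by apply: lt_0_INR; apply/ltP; lia.
exact: le_eps.
Qed.

Local Close Scope R_scope.

Lemma iter_CA_local (A : Type) (delta : nat) (f : seq A -> A) t x y i i' :
  (forall j, j <= t * (delta - 1) -> x (i + j) = y (i' + j)) ->
  iter t (CA delta f) x i = iter t (CA delta f) y i'.
Proof.
elim: t i i' => [|t IHt] i i' eq_xy /=.
  by have := eq_xy 0 (leq0n _); rewrite !addn0.
have window m : iota m delta = map (addn m) (iota 0 delta).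
  by rewrite -iotaDl addn0.
rewrite /CA /factor !addKn (window i) (window i') -!map_comp.
congr f; apply/eq_in_map => k; rewrite mem_iota => /andP[_ lt_k] /=.
apply: IHt => j le_j; rewrite -!addnA; apply: eq_xy.
rewrite mulSn; lia.
Qed.

Lemma sub_in_count (T : eqType) (a1 a2 : pred T) (s : seq T) :
  {in s, subpred a1 a2} -> count a1 s <= count a2 s.
Proof.
move=> sub12; rewrite -(@eq_in_count _ (predI a1 a2)) => [|x /sub12 /= a12].
  by apply: sub_count => x /andP[].
by case: (a1 x) a12 => // ->.
Qed.

Lemma count_predU_le (T : Type) (a1 a2 : pred T) (s : seq T) :
  count (predU a1 a2) s <= count a1 s + count a2 s.
Proof. by rewrite -count_predUI leq_addr. Qed.

Lemma count_iota_interval lo hi l :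
  count (fun i => lo <= i < hi) (iota 0 l) <= hi - lo.
Proof.
suff : count (fun i => lo <= i < hi) (iota 0 l) <= minn l hi - lo by lia.
elim: l => [|l IHl] //.
rewrite -[l.+1]addn1 iotaD count_cat /=.
case: (leqP lo l) => hlo; case: (ltnP l hi) => hhi /=; lia.
Qed.

Section GeometricBlocks.

Variable N : nat.

Definition blocks : pred nat :=
  fun i => has (fun k => (N * 2 ^ k <= i) && (i < N.+1 * 2 ^ k)) (iota 0 i.+1).

Lemma blocksP (N_gt0 : 0 < N) i :
  reflect (exists k, N * 2 ^ k <= i < N.+1 * 2 ^ k) (blocks i).
Proof.
apply: (iffP hasP) => [[k _ in_k] | [k in_k]]; first by exists k.
exists k => //; rewrite mem_iota ltnS.
have := ltn_expl k (ltnSn 1); have : 2 ^ k <= N * 2 ^ k by rewrite leq_pmull; lia.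
lia.
Qed.

Lemma count_blocks_ge k : 0 < N -> 2 ^ k <= count blocks (iota 0 (N.+1 * 2 ^ k)).
Proof.
move=> N_gt0; rewrite mulSn addnC iotaD count_cat add0n.
suff -> : count blocks (iota (N * 2 ^ k) (2 ^ k)) = 2 ^ k by rewrite leq_addl.
apply/eqP; rewrite -[X in _ == X](size_iota (N * 2 ^ k)) -all_count.
apply/allP => i; rewrite mem_iota => in_k; apply/(blocksP N_gt0); exists k; lia.
Qed.

Definition halo (K : nat) : pred nat :=
  fun i => has (fun k => ((N - 1) * 2 ^ k <= i) && (i < N.+1 * 2 ^ k)) (iota 0 K).

Lemma count_halo K l : count (halo K) (iota 0 l) <= 2 ^ K.+1.
Proof.
elim: K => [|K IHK]; first by rewrite (eq_count (a2 := pred0)) ?count_pred0.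
set J := fun i => (N - 1) * 2 ^ K <= i < N.+1 * 2 ^ K.
have halo_succ : halo K.+1 =1 predU (halo K) J.
  by move=> i; rewrite /halo -[K.+1]addn1 iotaD has_cat /= orbF.
rewrite (eq_count halo_succ); apply: leq_trans (count_predU_le _ _ _) _.
rewrite expnS mul2n -addnn; apply: leq_add => //.
apply: leq_trans (count_iota_interval _ _ l) _.
rewrite -mulnBl expnS; apply: leq_mul => //; lia.
Qed.

Lemma halo_scale l : 1 < N -> exists K, l <= (N - 1) * 2 ^ K <= (N - 1) + 2 * l.
Proof.
move=> N_gt1; elim: l => [|l [K /andP[le_l le_K]]].
  by exists 0; rewrite expn0 muln1; lia.
have : 0 < (N - 1) * 2 ^ K by rewrite muln_gt0 expn_gt0; lia.
case: (ltnP l ((N - 1) * 2 ^ K)) => lt_l; first by exists K; lia.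
by exists K.+1; rewrite expnS mulnCA; lia.
Qed.

Lemma blocks_window_halo K T i : 0 < N ->
  N.+1 * 2 ^ T <= i -> i < (N - 1) * 2 ^ K ->
  (exists2 j, j <= T & blocks (i + j)) -> halo K i.
Proof.
move=> N_gt0 le_i lt_i [j le_jT /(blocksP N_gt0)[k in_k]].
have lt_Tk : T < k.
  by rewrite -(ltn_exp2l _ _ (ltnSn 1)) -(ltn_pmul2l (ltn0Sn N)); lia.
have lt_jk : j < 2 ^ k by have := ltn_expl k (ltnSn 1); lia.
have split_k : N * 2 ^ k = (N - 1) * 2 ^ k + 2 ^ k.
  by rewrite -{1}(subnK N_gt0) mulnDl mul1n.
apply/hasP; exists k; last lia.
rewrite mem_iota add0n -(ltn_exp2l _ _ (ltnSn 1)) -(@ltn_pmul2l (N - 1)); lia.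
Qed.

End GeometricBlocks.

Local Open Scope R_scope.

Lemma INR_eventually_ge (r : R) : exists n0, forall l, (n0 < l)%N -> r <= INR l.
Proof.
have [n0 lt_r] := INR_unbounded r; exists n0 => l /ltP lt_l.
by apply: Rlt_le; apply: (Rlt_trans _ _ _ lt_r); apply: lt_INR.
Qed.

Lemma INR_le_of_scaled_bound (n cnt C l : nat) (eps : R) : (0 < n)%N ->
  (n * cnt <= n * C + 4 * l)%N -> 8 <= INR n * eps -> 2 * INR C <= INR l * eps ->
  INR cnt <= eps * INR l.
Proof.
move=> /ltP/lt_0_INR n_pos /leP/le_INR; rewrite -!plusE -!multE !plus_INR !mult_INR /=.
move=> le_cnt le_n le_C.
have l_ge0 := pos_INR l.
have le_4l : 8 * INR l <= INR n * eps * INR l by apply: Rmult_le_compat_r.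
have le_nC : INR n * (2 * INR C) <= INR n * (INR l * eps).
  by apply: Rmult_le_compat_l; lra.
apply: (Rmult_le_reg_l (INR n)) => //; lra.
Qed.

Local Close Scope R_scope.

Section BlocksPair.

Variables (A : eqType) (a b : A) (N : nat).

Definition blocks_word (i : nat) : A := if blocks N i then b else a.

Lemma feldman_blocks_word_gt0 :
  a != b -> 0 < N -> Rbar_lt R0 (feldman (fun=> a) blocks_word).
Proof.
move=> a_neq_b N_gt0.
rewrite feldman_constl; apply: (@upper_density_gt0 _ N.+1) => // k.
have supp : (fun i => blocks_word i != a) =1 blocks N.
  by move=> i; rewrite /blocks_word; case: (blocks N i); rewrite ?eqxx // eq_sym.
exists (N.+1 * 2 ^ k); split; rewrite ?muln_gt0 ?expn_gt0 //.
- have := ltn_expl k (ltnSn 1); have : 2 ^ k <= N.+1 * 2 ^ k by rewrite leq_pmull.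
  lia.
- by rewrite (eq_count supp) leq_pmul2l // count_blocks_ge.
Qed.

Variables (delta : nat) (f : seq A -> A) (t : nat).
Let F := CA delta f.
Let T := t * (delta - 1).

Lemma count_iter_blocks_word l K : 0 < N -> l <= (N - 1) * 2 ^ K ->
  count (fun i => iter t F blocks_word i != iter t F (fun=> a) 0) (iota 0 l)
   <= N.+1 * 2 ^ T + 2 ^ K.+1.
Proof.
move=> N_gt0 le_l.
set near := predU (fun i => i < N.+1 * 2 ^ T) (halo N K).
apply: (@leq_trans (count near (iota 0 l))).
  apply: sub_in_count => i; rewrite mem_iota add0n => /andP[_ lt_il] neq_i /=.
  case: (ltnP i (N.+1 * 2 ^ T)) => //= le_i.
  apply: (blocks_window_halo N_gt0 le_i); first lia.
  case: (boolP (has (fun j => blocks N (i + j)) (iota 0 T.+1))) => [/hasP[j]|/hasPn none].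
    by rewrite mem_iota ltnS => /andP[_ le_jT] in_j; exists j.
  move/negP: neq_i; case; apply/eqP; apply: iter_CA_local => j le_jT.
  by rewrite /blocks_word (negbTE (none j _)) // mem_iota ltnS.
apply: leq_trans (count_predU_le _ _ _) _; apply: leq_add; last exact: count_halo.
by have := count_iota_interval 0 (N.+1 * 2 ^ T) l; rewrite subn0.
Qed.

Lemma feldman_iter_blocks_word_le (eps : R) : 1 < N -> Rlt R0 eps ->
  Rle 8 (INR (N - 1) * eps) ->
  Rbar_le (feldman (iter t F (fun=> a)) (iter t F blocks_word)) eps.
Proof.
move=> N_gt1 eps_pos le_8.
set c := iter t F (fun=> a) 0.
have -> : iter t F (fun=> a) = fun=> c.
  by apply: functional_extensionality => i; apply: iter_CA_local.
rewrite feldman_constl.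
set C := N.+1 * 2 ^ T + 2.
have [n0 le_C] := INR_eventually_ge (Rdiv (2 * INR C) eps).
apply: (@upper_density_le _ _ n0) => l lt_l.
have [K /andP[le_l le_K]] := halo_scale l N_gt1.
apply: (@INR_le_of_scaled_bound (N - 1) _ C) => //; first lia.
  have le_count := count_iter_blocks_word (ltnW N_gt1) le_l.
  apply: leq_trans (leq_mul (leqnn (N - 1)) le_count) _.
  rewrite expnS mulnDr mulnCA /C mulnDr; lia.
by apply/Rle_div_l => //; apply: le_C.
Qed.

End BlocksPair.

Lemma not_feldman_expansive (A : eqType) (F : (nat -> A) -> nat -> A) :
  (forall eps : R, Rlt R0 eps -> exists x y : nat -> A,
     Rbar_lt R0 (feldman x y) /\
     forall t, Rbar_le (feldman (iter t F x) (iter t F y)) eps) ->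
  ~ feldman_expansive F.
Proof.
move=> close [eps [eps_pos expansive]].
have [x [y [xy_pos xy_close]]] := close eps eps_pos.
have [t far] := expansive x y xy_pos.
exact: Rbar_lt_not_le far (xy_close t).
Qed.

Lemma CA_feldman_close_pairs (A : finType) (delta : nat) (f : seq A -> A) (eps : R) :
  1 < #|A| -> Rlt R0 eps -> exists x y : nat -> A,
    Rbar_lt R0 (feldman x y) /\
    forall t, Rbar_le (feldman (iter t (CA delta f) x) (iter t (CA delta f) y)) eps.
Proof.
move=> A_gt1 eps_pos.
have [a [b [_ _ a_neq_b]]] := card_gt1P A_gt1.
have [n le_n] := INR_eventually_ge (Rdiv 8 eps).
exists (fun=> a), (blocks_word a b n.+2); split.
  exact: feldman_blocks_word_gt0 a_neq_b (ltn0Sn _).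
move=> t; apply: feldman_iter_blocks_word_le => //.
by rewrite subn1; apply/Rle_div_l => //; apply: le_n.
Qed.

Theorem mainTheorem16 (A : finType) (hA : 1 < #|A|) (delta : nat)
  (hdelta : 0 < delta) (f : seq A -> A) :
  ~ feldman_expansive (CA delta f) /\
  (forall eps : R, Rlt R0 eps ->
     exists x y : nat -> A, Rbar_lt (Rbar.Finite R0) (feldman x y) /\
       forall t : nat,
         Rbar_le (feldman (iter t (CA delta f) x) (iter t (CA delta f) y)) (Rbar.Finite eps)).
Proof.
have close eps := @CA_feldman_close_pairs A delta f eps hA.
by split; first exact: not_feldman_expansive.
Qed.
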